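(* Let $H\supseteq\mathbb R$ be a Hardy field with $\partial(H)=H$ (every element of $H$ is the derivative of an element of $H$), and let $K=H[i]\subseteq\mathcal C^{<\infty}[i]$. The following are equivalent: (i) $\operatorname{I}(K)\subseteq K^\dagger$; (ii) $e^f\in K$ for all $f\in K$ with $f\prec1$; (iii) $e^\phi,\cos\phi,\sin\phi\in H$ for all $\phi\in H$ with $\phi\prec1$.
   Context: $\mathcal C^{<\infty}$ is the ring of germs at $+\infty$ of real functions that are $n$-times continuously differentiable for every $n$ (on some interval $(a,+\infty)$, $a$ depending on $n$... i.e. $\bigcap_n\mathcal C^n$), and $\mathcal C^{<\infty}[i]=\mathcal C^{<\infty}+\mathcal C^{<\infty}i$ its complexification, with derivation $(g+hi)'=g'+h'i$. A Hardy field is a subfield of $\mathcal C^{<\infty}$ closed under derivation. For complex germs, $f\preceq g$ iff $|f|\le c|g|$ eventually for some $c>0$; $f\prec g$ iff $g(t)\ne0$ eventually and $f(t)/g(t)\to0$. $\mathcal O_K=\{f\in K:f\preceq1\}$; $\operatorname{I}(K)$ is the $\mathcal O_K$-submodule of $K$ generated by $\{f':f\in\mathcal O_K\}$; $K^\dagger=\{f'/f:f\in K^\times\}$. *)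

From Stdlib Require Import Reals List.
From Coquelicot Require Import Coquelicot.
Open Scope R_scope.

(* Germs at +oo are represented by functions R -> R (resp. R -> C);
   properties of germs are stated "eventually", i.e. on some (a,+oo). *)
Definition eventually_at_pinfty (P : R -> Prop) : Prop :=
  exists a : R, forall t : R, a < t -> P t.

Definition ev_eq {T : Type} (f g : R -> T) : Prop :=
  eventually_at_pinfty (fun t => f t = g t).

Definition Cinf (f : R -> R) : Prop :=
  forall n : nat, exists a : R, forall t : R, a < t ->
    (forall k : nat, (k <= n)%nat -> ex_derive_n f k t) /\
    continuous (Derive_n f n) t.

(* A Hardy field, as a set of germs: a set of functions saturated under
   eventual equality, consisting of C^{<oo} germs, which is a subfield of
   the ring of germs C^{<oo} and is closed under derivation. *)
Definition hardy_field (H : (R -> R) -> Prop) : Prop :=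
  (forall f g, H f -> ev_eq f g -> H g) /\
  (forall f, H f -> Cinf f) /\
  H (fun _ => 0) /\ H (fun _ => 1) /\
  (forall f g, H f -> H g -> H (fun t => f t + g t)) /\
  (forall f, H f -> H (fun t => - f t)) /\
  (forall f g, H f -> H g -> H (fun t => f t * g t)) /\
  (forall f, H f -> ~ ev_eq f (fun _ => 0) ->
     exists g, H g /\ ev_eq (fun t => f t * g t) (fun _ => 1)) /\
  (forall f, H f -> H (Derive f)).

(* K = H[i] : complex germs g + h i with g, h in H *)
Definition inK (H : (R -> R) -> Prop) (f : R -> C) : Prop :=
  H (fun t => fst (f t)) /\ H (fun t => snd (f t)).

Definition cderiv (f : R -> C) : R -> C :=
  fun t => (Derive (fun s => fst (f s)) t, Derive (fun s => snd (f s)) t).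

Definition cpreceq (f g : R -> C) : Prop :=
  exists c : R, 0 < c /\
    eventually_at_pinfty (fun t => Cmod (f t) <= c * Cmod (g t)).

Definition cprec1 (f : R -> C) : Prop :=
  forall eps : R, 0 < eps -> eventually_at_pinfty (fun t => Cmod (f t) < eps).

Definition rprec1 (f : R -> R) : Prop :=
  forall eps : R, 0 < eps -> eventually_at_pinfty (fun t => Rabs (f t) < eps).

Definition inOK (H : (R -> R) -> Prop) (f : R -> C) : Prop :=
  inK H f /\ cpreceq f (fun _ => RtoC 1).

(* I(K) : the O_K-submodule of K generated by { f' : f in O_K }, i.e. the
   germs of finite sums  sum_j a_j * f_j'  with a_j, f_j in O_K *)
Definition inIK (H : (R -> R) -> Prop) (g : R -> C) : Prop :=
  exists l : list ((R -> C) * (R -> C)),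
    (forall p, In p l -> inOK H (fst p) /\ inOK H (snd p)) /\
    ev_eq g (fun t => fold_right Cplus (RtoC 0)
                        (map (fun p => Cmult (fst p t) (cderiv (snd p) t)) l)).

Definition inKdagger (H : (R -> R) -> Prop) (g : R -> C) : Prop :=
  exists f : R -> C, inK H f /\ ~ ev_eq f (fun _ => RtoC 0) /\
    ev_eq g (fun t => Cdiv (cderiv f t) (f t)).

Definition cexp (z : C) : C :=
  (exp (fst z) * cos (snd z), exp (fst z) * sin (snd z)).

From Stdlib Require Import Reals List Lra Classical.
From Coquelicot Require Import Coquelicot.
Open Scope R_scope.

(* Conditions (ii) and (iii) are the same statement read componentwise, since
   e^(a + b i) = e^a (cos b + i sin b).

   (i) => (ii): if f ≺ 1 then f lies in O_K, so f' lies in I(K) ⊆ K†, say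
   f' = y'/y.  Then (y e^(-f))' = 0, so e^f is a constant multiple of y.

   (ii) => (i): every element of I(K) has a bounded antiderivative in K.  For
   a, b ∈ H bounded, an antiderivative F ∈ H of a b' (which exists as ∂(H) = H)
   is bounded because b is eventually monotone, so that
   |F(t) - F(t0)| <= sup |a| * |b(t) - b(t0)|.  A bounded element of H is
   eventually monotone, hence converges, so F - c ≺ 1 for a constant c, and
   g = F' is the logarithmic derivative of e^(F - c) ∈ K. *)

Lemma ev_and (P Q : R -> Prop) :
  eventually_at_pinfty P -> eventually_at_pinfty Q ->
  eventually_at_pinfty (fun t => P t /\ Q t).
Proof. exact (filter_and (F := Rbar_locally p_infty) P Q). Qed.

Lemma ev_imp (P Q : R -> Prop) :
  (forall t, P t -> Q t) -> eventually_at_pinfty P -> eventually_at_pinfty Q.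
Proof. exact (filter_imp (F := Rbar_locally p_infty) P Q). Qed.

Lemma ev_forall (P : R -> Prop) : (forall t, P t) -> eventually_at_pinfty P.
Proof. exact (filter_forall (F := Rbar_locally p_infty) P). Qed.

(** * Real analysis on a half-line *)

Lemma nondecreasing_of_derive_nonneg (f df : R -> R) (a : R) :
  (forall t, a < t -> is_derive f t (df t)) -> (forall t, a < t -> 0 <= df t) ->
  forall x y, a < x -> x <= y -> f x <= f y.
Proof.
  intros Df Hdf x y Hx Hxy.
  destruct (Req_dec x y) as [<-|Hne]; [lra|].
  destruct (MVT_gen f x y df) as [c [Hc Hmvt]].
  - intros z Hz. rewrite Rmin_left in Hz by lra. apply Df. lra.
  - intros z Hz. rewrite Rmin_left in Hz by lra.
    apply continuity_pt_filterlim, (ex_derive_continuous f z).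
    exists (df z). apply Df. lra.
  - rewrite Rmin_left, Rmax_right in Hc by lra.
    assert (0 <= df c) by (apply Hdf; lra). nra.
Qed.

Lemma Rabs_sub_le_of_derive_dominated (F G u v : R -> R) (a : R) :
  (forall t, a < t -> is_derive F t (u t)) -> (forall t, a < t -> is_derive G t (v t)) ->
  (forall t, a < t -> Rabs (u t) <= v t) ->
  forall x y, a < x -> x <= y -> Rabs (F y - F x) <= G y - G x.
Proof.
  intros DF DG Huv x y Hx Hxy.
  assert (Hminus : G x - F x <= G y - F y).
  { apply (nondecreasing_of_derive_nonneg (fun t => G t - F t) (fun t => v t - u t) a);
      auto; intros t Ht.
    - apply (is_derive_minus G F t (v t) (u t)); auto.
    - specialize (Huv t Ht). apply Rabs_le_between in Huv. lra. }
  assert (Hplus : G x + F x <= G y + F y).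
  { apply (nondecreasing_of_derive_nonneg (fun t => G t + F t) (fun t => v t + u t) a);
      auto; intros t Ht.
    - apply (is_derive_plus G F t (v t) (u t)); auto.
    - specialize (Huv t Ht). apply Rabs_le_between in Huv. lra. }
  apply Rabs_le. lra.
Qed.

Lemma eq_of_derive_zero (f : R -> R) (a : R) :
  (forall t, a < t -> is_derive f t 0) -> forall x y, a < x -> a < y -> f x = f y.
Proof.
  intros Df.
  assert (Hle : forall x y, a < x -> x <= y -> f x = f y).
  { intros x y Hx Hxy.
    assert (Hdiff : Rabs (f y - f x) <= 0 - 0).
    { apply (Rabs_sub_le_of_derive_dominated f (fun _ => 0) (fun _ => 0) (fun _ => 0) a);
        auto; intros t _.
      - apply (is_derive_const (K := R_AbsRing) (V := R_NormedModule)).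
      - rewrite Rabs_R0. lra. }
    apply Rabs_le_between in Hdiff. lra. }
  intros x y Hx Hy. destruct (Rle_or_lt x y).
  - auto.
  - symmetry. apply Hle; lra.
Qed.

Lemma nondecreasing_bounded_converges (g : R -> R) (a M : R) :
  (forall x y, a < x -> x <= y -> g x <= g y) -> (forall t, a < t -> g t <= M) ->
  exists c, rprec1 (fun t => g t - c).
Proof.
  intros Hmon Hbd.
  destruct (completeness (fun y => exists t, a < t /\ y = g t)) as [c [Hub Hleast]].
  - exists M. intros y [t [Ht ->]]. auto.
  - exists (g (a + 1)), (a + 1). split; [lra|reflexivity].
  - exists c. intros eps Heps.
    destruct (classic (exists t, a < t /\ c - eps < g t)) as [[t0 [Ht0 Hgt0]]|Hnone].
    + exists t0. intros t Ht.
      assert (g t0 <= g t) by (apply Hmon; lra).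
      assert (g t <= c) by (apply Hub; exists t; split; [lra|reflexivity]).
      apply Rabs_lt_between. lra.
    + exfalso.
      assert (c <= c - eps); [|lra].
      apply Hleast. intros y [t [Ht ->]]. apply Rnot_lt_le. intros Hlt.
      apply Hnone. exists t. auto.
Qed.

Lemma same_sign_of_continuous_nonzero (h : R -> R) (a : R) :
  (forall t, a < t -> h t <> 0 /\ continuity_pt h t) ->
  forall x y, a < x -> a < y -> 0 <= h x * h y.
Proof.
  intros Hh.
  assert (Hlt : forall x y, a < x -> x < y -> 0 <= h x * h y).
  { intros x y Hx Hxy.
    destruct (Rle_or_lt 0 (h x * h y)) as [|Hneg]; [assumption|exfalso].
    destruct (Rlt_or_le (h x) 0) as [Hx0|Hx0].
    - assert (0 < h y) by nra.
      destruct (Ranalysis5.IVT_interv h x y) as [z [Hz Hz0]]; try lra.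
      + intros c Hc. apply Hh. lra.
      + exact (proj1 (Hh z ltac:(lra)) Hz0).
    - destruct Hx0 as [Hx0|Hx0]; [|rewrite <- Hx0 in Hneg; lra].
      assert (h y < 0) by nra.
      destruct (Ranalysis5.IVT_interv (fun s => - h s) x y) as [z [Hz Hz0]]; try lra.
      + intros c Hc. apply continuity_pt_opp, Hh. lra.
      + apply (proj1 (Hh z ltac:(lra))). lra. }
  intros x y Hx Hy. destruct (Rtotal_order x y) as [Hxy|[<-|Hxy]].
  - auto.
  - nra.
  - rewrite Rmult_comm. auto.
Qed.

(** * Complex numbers *)

Lemma Cmod_le_Rabs_plus (z : C) : Cmod z <= Rabs (fst z) + Rabs (snd z).
Proof.
  unfold Cmod. rewrite <- (sqrt_Rsqr (Rabs (fst z) + Rabs (snd z))).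
  2: { pose proof (Rabs_pos (fst z)); pose proof (Rabs_pos (snd z)); lra. }
  apply sqrt_le_1_alt. rewrite <- (pow2_abs (fst z)), <- (pow2_abs (snd z)). unfold Rsqr.
  pose proof (Rabs_pos (fst z)); pose proof (Rabs_pos (snd z)). nra.
Qed.

Lemma Rabs_fst_le_Cmod (z : C) : Rabs (fst z) <= Cmod z.
Proof. eapply Rle_trans; [apply Rmax_l|apply Rmax_Cmod]. Qed.

Lemma Rabs_snd_le_Cmod (z : C) : Rabs (snd z) <= Cmod z.
Proof. eapply Rle_trans; [apply Rmax_r|apply Rmax_Cmod]. Qed.

Lemma cprec1_of_rprec1 (f : R -> C) :
  rprec1 (fun t => fst (f t)) -> rprec1 (fun t => snd (f t)) -> cprec1 f.
Proof.
  intros H1 H2 eps Heps.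
  generalize (ev_and _ _ (H1 (eps / 2) ltac:(lra)) (H2 (eps / 2) ltac:(lra))).
  apply ev_imp. intros t [A B].
  eapply Rle_lt_trans; [apply Cmod_le_Rabs_plus|lra].
Qed.

Lemma rprec1_fst_of_cprec1 (f : R -> C) : cprec1 f -> rprec1 (fun t => fst (f t)).
Proof.
  intros Hf eps Heps. generalize (Hf eps Heps). apply ev_imp. intros t Ht.
  eapply Rle_lt_trans; [apply Rabs_fst_le_Cmod|exact Ht].
Qed.

Lemma rprec1_snd_of_cprec1 (f : R -> C) : cprec1 f -> rprec1 (fun t => snd (f t)).
Proof.
  intros Hf eps Heps. generalize (Hf eps Heps). apply ev_imp. intros t Ht.
  eapply Rle_lt_trans; [apply Rabs_snd_le_Cmod|exact Ht].
Qed.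

Lemma cexp_plus (z w : C) : cexp (z + w)%C = (cexp z * cexp w)%C.
Proof.
  destruct z as [x y], w as [u v]. unfold cexp, Cplus, Cmult. simpl.
  rewrite exp_plus, cos_plus, sin_plus. f_equal; ring.
Qed.

Lemma cexp_0 : cexp 0 = 1.
Proof. unfold cexp. simpl. rewrite exp_0, cos_0, sin_0. apply injective_projections; simpl; ring. Qed.

Lemma cexp_neq0 (z : C) : cexp z <> 0.
Proof.
  intros Z.
  assert (E : (cexp z * cexp (- z))%C = 1)
    by (rewrite <- cexp_plus, Cplus_opp_r; exact cexp_0).
  rewrite Z, Cmult_0_l in E. exact (C1_nz (eq_sym E)).
Qed.

Definition is_cderive (f : R -> C) (t : R) (d : C) : Prop :=
  is_derive (fun s => fst (f s)) t (fst d) /\ is_derive (fun s => snd (f s)) t (snd d).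

Lemma cderiv_of_is_cderive (f : R -> C) (t : R) (d : C) :
  is_cderive f t d -> cderiv f t = d.
Proof.
  intros [D1 D2]. apply injective_projections; apply is_derive_unique; assumption.
Qed.

Lemma is_cderive_opp (f : R -> C) (t : R) (d : C) :
  is_cderive f t d -> is_cderive (fun s => - f s)%C t (- d)%C.
Proof.
  intros [D1 D2]. split.
  - apply (is_derive_opp (fun s => fst (f s))). exact D1.
  - apply (is_derive_opp (fun s => snd (f s))). exact D2.
Qed.

Lemma is_cderive_mult (f g : R -> C) (t : R) (df dg : C) :
  is_cderive f t df -> is_cderive g t dg ->
  is_cderive (fun s => f s * g s)%C t (df * g t + f t * dg)%C.
Proof.
  intros [Df1 Df2] [Dg1 Dg2]. split; simpl.
  - replace (fst df * fst (g t) - snd df * snd (g t) + (fst (f t) * fst dg - snd (f t) * snd dg))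
      with ((fst df * fst (g t) + fst (f t) * fst dg)
            - (snd df * snd (g t) + snd (f t) * snd dg)) by ring.
    apply (is_derive_minus (fun s => fst (f s) * fst (g s)) (fun s => snd (f s) * snd (g s)));
      apply (is_derive_mult (K := R_AbsRing)); auto; intros; apply Rmult_comm.
  - replace (fst df * snd (g t) + snd df * fst (g t) + (fst (f t) * snd dg + snd (f t) * fst dg))
      with ((fst df * snd (g t) + fst (f t) * snd dg)
            + (snd df * fst (g t) + snd (f t) * fst dg)) by ring.
    apply (is_derive_plus (fun s => fst (f s) * snd (g s)) (fun s => snd (f s) * fst (g s)));
      apply (is_derive_mult (K := R_AbsRing)); auto; intros; apply Rmult_comm.
Qed.

Lemma is_cderive_cexp (f : R -> C) (t : R) (d : C) :
  is_cderive f t d -> is_cderive (fun s => cexp (f s)) t (d * cexp (f t))%C.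
Proof.
  intros [D1 D2]. unfold cexp.
  set (f1 := fun s => fst (f s)). set (f2 := fun s => snd (f s)).
  change (is_cderive (fun s => (exp (f1 s) * cos (f2 s), exp (f1 s) * sin (f2 s))) t
    (Cmult d (exp (f1 t) * cos (f2 t), exp (f1 t) * sin (f2 t)))).
  assert (E1 : Derive (fun s => f1 s) t = fst d) by (apply is_derive_unique; exact D1).
  assert (E2 : Derive (fun s => f2 s) t = snd d) by (apply is_derive_unique; exact D2).
  split; simpl; auto_derive; try (repeat split; eexists; eauto); rewrite E1, E2; ring.
Qed.

Lemma eq_of_cderive_zero (w : R -> C) (a : R) :
  (forall t, a < t -> is_cderive w t 0) -> forall x y, a < x -> a < y -> w x = w y.
Proof.
  intros Dw x y Hx Hy. apply injective_projections.
  - apply (eq_of_derive_zero (fun s => fst (w s)) a); auto.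
    intros t Ht. apply (Dw t Ht).
  - apply (eq_of_derive_zero (fun s => snd (w s)) a); auto.
    intros t Ht. apply (Dw t Ht).
Qed.

(** * Hardy fields *)

Section HardyField.

Variable H : (R -> R) -> Prop.
Hypothesis HH : hardy_field H.
Hypothesis Hreal : forall c : R, H (fun _ => c).
Hypothesis Hint : forall f, H f -> exists g, H g /\ ev_eq (Derive g) f.

Lemma hardy_ev_eq (f g : R -> R) : H f -> ev_eq f g -> H g.
Proof. destruct HH as (Hev & _). apply Hev. Qed.

Lemma hardy_plus (f g : R -> R) : H f -> H g -> H (fun t => f t + g t).
Proof. destruct HH as (_ & _ & _ & _ & Hplus & _). apply Hplus. Qed.

Lemma hardy_opp (f : R -> R) : H f -> H (fun t => - f t).
Proof. destruct HH as (_ & _ & _ & _ & _ & Hopp & _). apply Hopp. Qed.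

Lemma hardy_mult (f g : R -> R) : H f -> H g -> H (fun t => f t * g t).
Proof. destruct HH as (_ & _ & _ & _ & _ & _ & Hmult & _). apply Hmult. Qed.

Lemma hardy_Derive (f : R -> R) : H f -> H (Derive f).
Proof. destruct HH as (_ & _ & _ & _ & _ & _ & _ & _ & HD). apply HD. Qed.

Lemma hardy_minus_const (f : R -> R) (c : R) : H f -> H (fun t => f t - c).
Proof. intros Hf. apply (hardy_plus f (fun _ => - c)); [exact Hf|apply Hreal]. Qed.

Lemma hardy_is_derive (f : R -> R) : H f ->
  eventually_at_pinfty (fun t => is_derive f t (Derive f t)).
Proof.
  intros Hf. destruct HH as (_ & HC & _). destruct (HC f Hf 1%nat) as [a Ha].
  exists a. intros t Ht. apply Derive_correct. exact (proj1 (Ha t Ht) 1%nat (le_n 1)).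
Qed.

Lemma hardy_continuity (f : R -> R) : H f ->
  eventually_at_pinfty (fun t => continuity_pt f t).
Proof.
  intros Hf. destruct HH as (_ & HC & _). destruct (HC f Hf 0%nat) as [a Ha].
  exists a. intros t Ht. apply continuity_pt_filterlim. exact (proj2 (Ha t Ht)).
Qed.

Lemma hardy_zero_or_nonzero (h : R -> R) : H h ->
  ev_eq h (fun _ => 0) \/ eventually_at_pinfty (fun t => h t <> 0).
Proof.
  intros Hh. destruct (classic (ev_eq h (fun _ => 0))) as [Z|Hnz]; [left; exact Z|right].
  destruct HH as (_ & _ & _ & _ & _ & _ & _ & Hinv & _).
  destruct (Hinv h Hh Hnz) as [g [_ Hg]].
  revert Hg. apply ev_imp. intros t Hg Z. cbv beta in Hg. rewrite Z in Hg. lra.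
Qed.

Lemma hardy_nonneg_or_nonpos (h : R -> R) : H h ->
  eventually_at_pinfty (fun t => 0 <= h t) \/ eventually_at_pinfty (fun t => h t <= 0).
Proof.
  intros Hh. destruct (hardy_zero_or_nonzero h Hh) as [Z|Hnz].
  - left. revert Z. apply ev_imp. intros t Z. cbv beta in Z. lra.
  - destruct (ev_and _ _ Hnz (hardy_continuity h Hh)) as [a Ha].
    assert (Hsign := same_sign_of_continuous_nonzero h a Ha (a + 1)).
    assert (Ha1 : h (a + 1) <> 0) by (apply Ha; lra).
    destruct (Rle_or_lt 0 (h (a + 1))); [left|right]; exists a; intros t Ht;
      specialize (Hsign t ltac:(lra) Ht); nra.
Qed.

Lemma hardy_monotone (h : R -> R) : H h ->
  eventually_at_pinfty (fun t => is_derive h t (Derive h t) /\ 0 <= Derive h t) \/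
  eventually_at_pinfty (fun t => is_derive h t (Derive h t) /\ Derive h t <= 0).
Proof.
  intros Hh.
  destruct (hardy_nonneg_or_nonpos (Derive h) (hardy_Derive h Hh)); [left|right];
    apply ev_and; auto using hardy_is_derive.
Qed.

Lemma hardy_bounded_converges (h : R -> R) (M : R) : H h ->
  eventually_at_pinfty (fun t => Rabs (h t) <= M) -> exists c, rprec1 (fun t => h t - c).
Proof.
  intros Hh HM.
  destruct (hardy_monotone h Hh) as [Hmon|Hmon];
    destruct (ev_and _ _ Hmon HM) as [a Ha].
  - apply (nondecreasing_bounded_converges h a M).
    + apply (nondecreasing_of_derive_nonneg h (Derive h) a); intros t Ht; apply Ha, Ht.
    + intros t Ht. destruct (Ha t Ht) as [_ Hb]. apply Rabs_le_between in Hb. lra.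
  - destruct (nondecreasing_bounded_converges (fun t => - h t) a M) as [c Hc].
    + apply (nondecreasing_of_derive_nonneg _ (fun t => - Derive h t) a); intros t Ht.
      * apply (is_derive_opp h), Ha, Ht.
      * destruct (Ha t Ht) as [[_ Hd] _]. lra.
    + intros t Ht. destruct (Ha t Ht) as [_ Hb]. apply Rabs_le_between in Hb. lra.
    + exists (- c). intros eps Heps. generalize (Hc eps Heps). apply ev_imp. intros t Ht.
      replace (h t - - c) with (- (- h t - c)) by ring. rewrite Rabs_Ropp. exact Ht.
Qed.

Definition has_bounded_primitive (u : R -> R) : Prop :=
  exists F, H F /\ eventually_at_pinfty (fun t => is_derive F t (u t)) /\
    exists M, eventually_at_pinfty (fun t => Rabs (F t) <= M).

Lemma has_bounded_primitive_ev_eq (u v : R -> R) :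
  ev_eq u v -> has_bounded_primitive u -> has_bounded_primitive v.
Proof.
  intros Euv [F [HF [DF Hbd]]]. exists F. split; [exact HF|split; [|exact Hbd]].
  generalize (ev_and _ _ Euv DF). apply ev_imp. intros t [E D]. rewrite <- E. exact D.
Qed.

Lemma has_bounded_primitive_0 : has_bounded_primitive (fun _ => 0).
Proof.
  exists (fun _ => 0). split; [apply Hreal|split].
  - apply ev_forall. intros t. apply (is_derive_const (K := R_AbsRing) (V := R_NormedModule)).
  - exists 0. apply ev_forall. intros t. rewrite Rabs_R0. lra.
Qed.

Lemma has_bounded_primitive_plus (u v : R -> R) :
  has_bounded_primitive u -> has_bounded_primitive v ->
  has_bounded_primitive (fun t => u t + v t).
Proof.
  intros [F [HF [DF [M HM]]]] [G [HG [DG [N HN]]]].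
  exists (fun t => F t + G t). split; [apply hardy_plus; assumption|split].
  - generalize (ev_and _ _ DF DG). apply ev_imp. intros t [D1 D2].
    apply (is_derive_plus F G); assumption.
  - exists (M + N). generalize (ev_and _ _ HM HN). apply ev_imp. intros t [B1 B2].
    eapply Rle_trans; [apply Rabs_triang|lra].
Qed.

Lemma has_bounded_primitive_opp (u : R -> R) :
  has_bounded_primitive u -> has_bounded_primitive (fun t => - u t).
Proof.
  intros [F [HF [DF [M HM]]]].
  exists (fun t => - F t). split; [apply hardy_opp; assumption|split].
  - revert DF. apply ev_imp. intros t D. apply (is_derive_opp F). exact D.
  - exists M. revert HM. apply ev_imp. intros t B. rewrite Rabs_Ropp. exact B.
Qed.

Lemma has_bounded_primitive_mult_Derive_nondecreasing (a b : R -> R) (A B : R) :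
  H a -> H b ->
  eventually_at_pinfty (fun t => Rabs (a t) <= A) ->
  eventually_at_pinfty (fun t => Rabs (b t) <= B) ->
  eventually_at_pinfty (fun t => is_derive b t (Derive b t) /\ 0 <= Derive b t) ->
  has_bounded_primitive (fun t => a t * Derive b t).
Proof.
  intros Ha Hb HA HB Hmon.
  destruct (Hint (fun t => a t * Derive b t)) as [F [HF HdF]].
  { apply hardy_mult; [exact Ha|apply hardy_Derive, Hb]. }
  destruct (ev_and _ _ (ev_and _ _ (ev_and _ _ HA HB) Hmon)
                       (ev_and _ _ HdF (hardy_is_derive F HF))) as [T HT].
  assert (DF : forall t, T < t -> is_derive F t (a t * Derive b t)).
  { intros t Ht. destruct (HT t Ht) as [_ [E D]]. rewrite <- E. exact D. }
  exists F. split; [exact HF|split; [exists T; exact DF|]].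
  exists (Rabs (F (T + 1)) + 2 * A * B). exists (T + 1). intros y Hy.
  destruct (HT (T + 1) ltac:(lra)) as [[[Ha0 Hb0] _] _].
  destruct (HT y ltac:(lra)) as [[[Ha1 Hb1] _] _].
  (* |F'| = |a| b' <= A b', so F varies at most as much as A b *)
  assert (Hvar : Rabs (F y - F (T + 1)) <= A * b y - A * b (T + 1)).
  { apply (Rabs_sub_le_of_derive_dominated F (fun t => A * b t)
             (fun t => a t * Derive b t) (fun t => A * Derive b t) T); try lra.
    - exact DF.
    - intros t Ht. destruct (HT t Ht) as [[_ [Db _]] _]. apply is_derive_scal, Db.
    - intros t Ht. destruct (HT t Ht) as [[[Hat _] [_ Hpos]] _].
      rewrite Rabs_mult, (Rabs_pos_eq (Derive b t) Hpos).
      apply Rmult_le_compat_r; assumption. }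
  assert (0 <= A) by (eapply Rle_trans; [apply Rabs_pos|exact Ha1]).
  apply Rabs_le_between in Hb0, Hb1.
  replace (F y) with (F (T + 1) + (F y - F (T + 1))) by ring.
  eapply Rle_trans; [apply Rabs_triang|]. nra.
Qed.

Lemma has_bounded_primitive_mult_Derive (a b : R -> R) (A B : R) :
  H a -> H b ->
  eventually_at_pinfty (fun t => Rabs (a t) <= A) ->
  eventually_at_pinfty (fun t => Rabs (b t) <= B) ->
  has_bounded_primitive (fun t => a t * Derive b t).
Proof.
  intros Ha Hb HA HB.
  destruct (hardy_monotone b Hb) as [Hmon|Hmon].
  - exact (has_bounded_primitive_mult_Derive_nondecreasing a b A B Ha Hb HA HB Hmon).
  - apply (has_bounded_primitive_ev_eq (fun t => - (a t * Derive (fun s => - b s) t))).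
    { apply ev_forall. intros t. rewrite Derive_opp. ring. }
    apply has_bounded_primitive_opp,
      (has_bounded_primitive_mult_Derive_nondecreasing a _ A B Ha (hardy_opp b Hb) HA).
    + revert HB. apply ev_imp. intros t Bt. rewrite Rabs_Ropp. exact Bt.
    + revert Hmon. apply ev_imp. intros t [D Hneg]. rewrite Derive_opp.
      split; [apply (is_derive_opp b), D|lra].
Qed.

(** * The differential ring K = H[i] *)

Lemma inK_ev_eq (f g : R -> C) : inK H f -> ev_eq f g -> inK H g.
Proof.
  intros [H1 H2] E. split.
  - apply (hardy_ev_eq _ _ H1). revert E. apply ev_imp. intros t E. rewrite E. reflexivity.
  - apply (hardy_ev_eq _ _ H2). revert E. apply ev_imp. intros t E. rewrite E. reflexivity.
Qed.

Lemma inK_const (c : C) : inK H (fun _ => c).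
Proof. split; apply Hreal. Qed.

Lemma inK_mult (f g : R -> C) : inK H f -> inK H g -> inK H (fun t => f t * g t)%C.
Proof.
  intros [F1 F2] [G1 G2]. split; simpl.
  - apply (hardy_plus (fun t => fst (f t) * fst (g t)) (fun t => - (snd (f t) * snd (g t)))).
    + apply hardy_mult; assumption.
    + apply hardy_opp, hardy_mult; assumption.
  - apply hardy_plus; apply hardy_mult; assumption.
Qed.

Lemma inK_is_cderive (f : R -> C) : inK H f ->
  eventually_at_pinfty (fun t => is_cderive f t (cderiv f t)).
Proof. intros [F1 F2]. exact (ev_and _ _ (hardy_is_derive _ F1) (hardy_is_derive _ F2)). Qed.

Lemma inK_ev_neq0 (y : R -> C) : inK H y -> ~ ev_eq y (fun _ => 0%C) ->
  eventually_at_pinfty (fun t => y t <> 0%C).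
Proof.
  intros [Y1 Y2] Hnz.
  destruct (hardy_zero_or_nonzero _ Y1) as [Z1|N1].
  - destruct (hardy_zero_or_nonzero _ Y2) as [Z2|N2].
    + exfalso. apply Hnz. generalize (ev_and _ _ Z1 Z2). apply ev_imp.
      intros t [E1 E2]. apply injective_projections; assumption.
    + revert N2. apply ev_imp. intros t N Z. apply N. rewrite Z. reflexivity.
  - revert N1. apply ev_imp. intros t N Z. apply N. rewrite Z. reflexivity.
Qed.

Lemma inOK_of_cprec1 (f : R -> C) : inK H f -> cprec1 f -> inOK H f.
Proof.
  intros Hf Hsmall. split; [exact Hf|]. exists 1. split; [lra|].
  generalize (Hsmall 1 Rlt_0_1). apply ev_imp. intros t Ht. rewrite Cmod_1. lra.
Qed.

Lemma inOK_bounded (a : R -> C) : inOK H a ->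
  exists A, eventually_at_pinfty (fun t => Rabs (fst (a t)) <= A) /\
            eventually_at_pinfty (fun t => Rabs (snd (a t)) <= A).
Proof.
  intros [_ [c [_ Hc]]]. exists c.
  split; revert Hc; apply ev_imp; intros t Ht; rewrite Cmod_1, Rmult_1_r in Ht;
    eapply Rle_trans; eauto using Rabs_fst_le_Cmod, Rabs_snd_le_Cmod.
Qed.

Lemma cderiv_inIK (f : R -> C) : inOK H f -> inIK H (cderiv f).
Proof.
  intros Hf. exists (((fun _ => RtoC 1), f) :: nil). split.
  - intros p [<-|[]]. split; [|exact Hf]. split; [apply inK_const|].
    exists 1. split; [lra|]. apply ev_forall. intros t. cbv beta. rewrite Rmult_1_l. apply Rle_refl.
  - apply ev_forall. intros t. simpl. ring.
Qed.

Definition combination (l : list ((R -> C) * (R -> C))) (t : R) : C :=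
  fold_right Cplus 0%C (map (fun p => (fst p t * cderiv (snd p) t)%C) l).

Lemma combination_has_bounded_primitive (l : list ((R -> C) * (R -> C))) :
  (forall p, In p l -> inOK H (fst p) /\ inOK H (snd p)) ->
  has_bounded_primitive (fun t => fst (combination l t)) /\
  has_bounded_primitive (fun t => snd (combination l t)).
Proof.
  induction l as [|[a b] l IH]; intros Hl.
  - split; exact has_bounded_primitive_0.
  - destruct IH as [IH1 IH2]; [intros p Hp; apply Hl; right; exact Hp|].
    destruct (Hl (a, b) (or_introl eq_refl)) as [Ha Hb]. simpl in Ha, Hb.
    destruct (inOK_bounded a Ha) as [A [HA1 HA2]].
    destruct (inOK_bounded b Hb) as [B [HB1 HB2]].
    destruct Ha as [[Ha1 Ha2] _]. destruct Hb as [[Hb1 Hb2] _].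
    split.
    + apply (has_bounded_primitive_ev_eq (fun t =>
        (fst (a t) * Derive (fun s => fst (b s)) t
         + - (snd (a t) * Derive (fun s => snd (b s)) t))
        + fst (combination l t))).
      { apply ev_forall. intros t. reflexivity. }
      repeat apply has_bounded_primitive_plus; try apply has_bounded_primitive_opp;
        eauto using has_bounded_primitive_mult_Derive.
    + apply (has_bounded_primitive_ev_eq (fun t =>
        (fst (a t) * Derive (fun s => snd (b s)) t
         + snd (a t) * Derive (fun s => fst (b s)) t)
        + snd (combination l t))).
      { apply ev_forall. intros t. reflexivity. }
      repeat apply has_bounded_primitive_plus; eauto using has_bounded_primitive_mult_Derive.
Qed.

Lemma inIK_has_bounded_primitive (g : R -> C) : inIK H g ->
  has_bounded_primitive (fun t => fst (g t)) /\ has_bounded_primitive (fun t => snd (g t)).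
Proof.
  intros [l [Hl Hg]].
  destruct (combination_has_bounded_primitive l Hl) as [P1 P2].
  split; [revert P1|revert P2]; apply has_bounded_primitive_ev_eq;
    revert Hg; apply ev_imp; intros t E; rewrite E; reflexivity.
Qed.

Definition IK_sub_Kdagger : Prop := forall g, inIK H g -> inKdagger H g.

Definition cexp_small_in_K : Prop :=
  forall f, inK H f -> cprec1 f -> inK H (fun t => cexp (f t)).

Definition exp_cos_sin_small_in_H : Prop :=
  forall phi, H phi -> rprec1 phi ->
    H (fun t => exp (phi t)) /\ H (fun t => cos (phi t)) /\ H (fun t => sin (phi t)).

Lemma cexp_small_in_K_of_IK_sub_Kdagger : IK_sub_Kdagger -> cexp_small_in_K.
Proof.
  intros Hdag f Hf Hsmall.
  destruct (Hdag _ (cderiv_inIK f (inOK_of_cprec1 f Hf Hsmall))) as [y [Hy [Hy0 Hlog]]].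
  set (w := fun t => (y t * cexp (- f t))%C).
  destruct (ev_and _ _ (ev_and _ _ (inK_ev_neq0 y Hy Hy0) Hlog)
                       (ev_and _ _ (inK_is_cderive y Hy) (inK_is_cderive f Hf))) as [T HT].
  assert (Hw : forall t, T < t -> w t = w (T + 1)).
  { intros t Ht. apply (eq_of_cderive_zero w T); [|lra|lra].
    intros s Hs. destruct (HT s Hs) as [[Hnz Hq] [Dy Df]].
    replace (RtoC 0) with (cderiv y s * cexp (- f s) + y s * (- cderiv f s * cexp (- f s)))%C.
    - apply is_cderive_mult; [exact Dy|apply is_cderive_cexp, is_cderive_opp, Df].
    - rewrite Hq. field. exact Hnz. }
  set (w0 := w (T + 1)).
  assert (Hyw : forall t, T < t -> y t = (w0 * cexp (f t))%C).
  { intros t Ht. unfold w0. rewrite <- (Hw t Ht). unfold w.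
    rewrite <- Cmult_assoc, <- cexp_plus.
    replace (- f t + f t)%C with (RtoC 0) by ring. rewrite cexp_0. ring. }
  assert (Hw0 : w0 <> 0%C).
  { intros Z. destruct (HT (T + 1) ltac:(lra)) as [[Hnz _] _].
    apply Hnz. rewrite (Hyw (T + 1)), Z by lra. ring. }
  apply (inK_ev_eq (fun t => / w0 * y t)%C).
  - apply inK_mult; [apply inK_const|exact Hy].
  - exists T. intros t Ht. rewrite (Hyw t Ht). field. exact Hw0.
Qed.

Lemma IK_sub_Kdagger_of_cexp_small_in_K : cexp_small_in_K -> IK_sub_Kdagger.
Proof.
  intros Hexp g Hg.
  destruct (inIK_has_bounded_primitive g Hg)
    as [[F1 [HF1 [DF1 [M1 HM1]]]] [F2 [HF2 [DF2 [M2 HM2]]]]].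
  destruct (hardy_bounded_converges F1 M1 HF1 HM1) as [c1 Hc1].
  destruct (hardy_bounded_converges F2 M2 HF2 HM2) as [c2 Hc2].
  set (f := fun t => (F1 t - c1, F2 t - c2) : C).
  assert (Hf : inK H f) by (split; apply hardy_minus_const; assumption).
  exists (fun t => cexp (f t)). split; [|split].
  - apply Hexp; [exact Hf|apply cprec1_of_rprec1; assumption].
  - intros [a Ha]. exact (cexp_neq0 _ (Ha (a + 1) ltac:(lra))).
  - generalize (ev_and _ _ DF1 DF2). apply ev_imp. intros t [D1 D2].
    assert (Df : is_cderive f t (g t)).
    { split; simpl.
      - replace (fst (g t)) with (fst (g t) - 0) by ring.
        apply (is_derive_minus F1 (fun _ => c1)); [exact D1|].
        apply (is_derive_const (K := R_AbsRing) (V := R_NormedModule)).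
      - replace (snd (g t)) with (snd (g t) - 0) by ring.
        apply (is_derive_minus F2 (fun _ => c2)); [exact D2|].
        apply (is_derive_const (K := R_AbsRing) (V := R_NormedModule)). }
    rewrite (cderiv_of_is_cderive _ _ _ (is_cderive_cexp f t (g t) Df)).
    field. apply cexp_neq0.
Qed.

Lemma exp_cos_sin_small_in_H_of_cexp_small_in_K :
  cexp_small_in_K -> exp_cos_sin_small_in_H.
Proof.
  intros Hexp phi Hphi Hsmall.
  assert (Hzero : rprec1 (fun _ => 0)).
  { intros eps Heps. apply ev_forall. intros t. rewrite Rabs_R0. exact Heps. }
  destruct (Hexp (fun t => (phi t, 0))) as [Hre _].
  { split; [exact Hphi|exact (Hreal 0)]. }
  { apply cprec1_of_rprec1; assumption. }
  destruct (Hexp (fun t => (0, phi t))) as [Hcos Hsin].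
  { split; [exact (Hreal 0)|exact Hphi]. }
  { apply cprec1_of_rprec1; assumption. }
  split; [|split].
  - apply (hardy_ev_eq _ _ Hre), ev_forall. intros t. simpl. rewrite cos_0. ring.
  - apply (hardy_ev_eq _ _ Hcos), ev_forall. intros t. simpl. rewrite exp_0. ring.
  - apply (hardy_ev_eq _ _ Hsin), ev_forall. intros t. simpl. rewrite exp_0. ring.
Qed.

Lemma cexp_small_in_K_of_exp_cos_sin_small_in_H :
  exp_cos_sin_small_in_H -> cexp_small_in_K.
Proof.
  intros Hecs f [F1 F2] Hsmall.
  destruct (Hecs _ F1 (rprec1_fst_of_cprec1 f Hsmall)) as [Hexp _].
  destruct (Hecs _ F2 (rprec1_snd_of_cprec1 f Hsmall)) as [_ [Hcos Hsin]].
  split; apply hardy_mult; assumption.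
Qed.

End HardyField.

Theorem mainTheorem13 (H : (R -> R) -> Prop)
  (HH : hardy_field H)
  (Hreal : forall c : R, H (fun _ => c))
  (Hint : forall f, H f -> exists g, H g /\ ev_eq (Derive g) f) :
  ((forall g, inIK H g -> inKdagger H g) <->
   (forall f, inK H f -> cprec1 f -> inK H (fun t => cexp (f t)))) /\
  ((forall f, inK H f -> cprec1 f -> inK H (fun t => cexp (f t))) <->
   (forall phi, H phi -> rprec1 phi ->
      H (fun t => exp (phi t)) /\ H (fun t => cos (phi t)) /\
      H (fun t => sin (phi t)))).
Proof.
  split; split.
  - exact (cexp_small_in_K_of_IK_sub_Kdagger H HH Hreal).
  - exact (IK_sub_Kdagger_of_cexp_small_in_K H HH Hreal Hint).
  - exact (exp_cos_sin_small_in_H_of_cexp_small_in_K H HH Hreal).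
  - exact (cexp_small_in_K_of_exp_cos_sin_small_in_H H HH).
Qed.
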